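(* Let $S, U, M \ge 1$ be integers and let $\mu_Q \in \mathbb{R}_{+}^{S \times U}$ with rows $\mu_{q^{(1)}}, \dots, \mu_{q^{(S)}} \in \mathbb{R}_+^{U}$. Let $\mathbb{N} = \{0,1,2,\dots\}$. Say that a subset $\mathcal{M} \subseteq \{1,\dots,S\}$ \emph{suffices for exact matching} if for every agent distribution $X \in \mathbb{N}^{M \times S}$ there exists $\hat X \in \mathbb{N}^{M \times S}$ whose columns indexed by $s \notin \mathcal{M}$ are identically zero and such that $\hat X \mu_Q = X \mu_Q$. Then $\mathcal{M}$ suffices for exact matching if and only if for every $\tilde s \in \{1,\dots,S\} \setminus \mathcal{M}$ there exist nonnegative integers $\alpha_{s\tilde s} \in \mathbb{N}$, $s \in \mathcal{M}$, with $$\sum_{s \in \mathcal{M}} \alpha_{s\tilde s}\, \mu_{q^{(s)}} = \mu_{q^{(\tilde s)}}.$$ Consequently, the minspecies cardinality for exact matching, $\mathcal{D}_{\mathcal{G}_1}(\mu_Q)$ (the minimum cardinality of a subset $\mathcal{M}$ that suffices for exact matching), equals $$\min\Big\{ |\mathcal{M}_1| : \mathcal{M}_1 \subseteq \{1,\dots,S\},\ \forall \tilde s \notin \mathcal{M}_1\ \exists (\alpha_{s\tilde s})_{s\in\mathcal{M}_1} \in \mathbb{N}^{\mathcal{M}_1} \text{ with } \textstyle\sum_{s \in \mathcal{M}_1} \alpha_{s\tilde s}\, \mu_{q^{(s)}} = \mu_{q^{(\tilde s)}} \Big\}.$$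
   Context: A heterogeneous team consists of $S$ species; $\mu_Q$ is the expected species-trait matrix whose $(s,u)$ entry is the expected value of trait $u$ for an agent of species $s$. There are $M$ tasks; an agent distribution is a matrix $X \in \mathbb{N}^{M\times S}$ whose $(i,s)$ entry is the number of agents of species $s$ assigned to task $i$, and the resulting expected task-trait distribution is $X\mu_Q \in \mathbb{R}_+^{M\times U}$. The exact-matching goal for a desired trait distribution $Y^*$ requires $X\mu_Q = Y^*$. The number of available agents per species is not bounded in this statement. *)

From HB Require Import structures.
From mathcomp Require Import all_boot all_order all_algebra.
Set Implicit Arguments. Unset Strict Implicit. Unset Printing Implicit Defensive.
Import Order.TTheory GRing.Theory Num.Theory.
Local Open Scope ring_scope.

Definition natmx (R : realFieldType) (m n : nat) (X : 'M[nat]_(m, n)) : 'M[R]_(m, n) :=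
  map_mx (fun k : nat => k%:R) X.

Definition suffices_exact (R : realFieldType) (S U M : nat)
    (muQ : 'M[R]_(S, U)) (Mset : {set 'I_S}) : Prop :=
  forall X : 'M[nat]_(M, S),
    exists Xh : 'M[nat]_(M, S),
      (forall (i : 'I_M) (s : 'I_S), s \notin Mset -> Xh i s = 0%N) /\
      natmx R Xh *m muQ = natmx R X *m muQ.

Definition int_generated (R : realFieldType) (S U : nat)
    (muQ : 'M[R]_(S, U)) (Mset : {set 'I_S}) : Prop :=
  forall st : 'I_S, st \notin Mset ->
    exists alpha : 'I_S -> nat,
      \sum_(s in Mset) (alpha s)%:R *: row s muQ = row st muQ.

Definition is_min_card (S : nat) (P : {set 'I_S} -> Prop) (n : nat) : Prop :=
  (exists A : {set 'I_S}, P A /\ #|A| = n) /\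
  (forall A : {set 'I_S}, P A -> (n <= #|A|)%N).

From HB Require Import structures.
From mathcomp Require Import all_boot all_order all_algebra.
Import Order.TTheory GRing.Theory Num.Theory.
Local Open Scope ring_scope.

(* Row i of the task-trait matrix X muQ is the combination
   sum_s X(i,s) mu_s of the species trait rows, weighted by the agent counts.
   - Necessity: applying "suffices for exact matching" to the distribution
     with a single agent of species st (in task 0; M >= 1) yields a
     distribution supported on Mset whose row 0 writes mu_st as a
     nonnegative integer combination of the rows mu_s, s in Mset.
   - Sufficiency: choosing, for every st outside Mset, coefficients
     alpha(st, .) expressing mu_st, one replaces each agent of species st by
     alpha(st, s) agents of each species s in Mset; this "reduced"
     distribution has the same task-trait matrix.
   The statement on minimum cardinalities then follows from the general fact
   that pointwise equivalent predicates have the same minimum cardinality. *)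

Lemma is_min_card_equiv (S : nat) (P Q : {set 'I_S} -> Prop) (n : nat) :
  (forall A, P A <-> Q A) -> is_min_card P n <-> is_min_card Q n.
Proof.
move=> PQ; rewrite /is_min_card.
split=> [[[A [PA cardA]] minP] | [[A [QA cardA]] minQ]]; split.
- by exists A; split=> //; apply/PQ.
- by move=> B /PQ; apply: minP.
- by exists A; split=> //; apply/PQ.
- by move=> B /PQ; apply: minQ.
Qed.

Section ExactMatching.
Variables (R : realFieldType) (S U M : nat).
Variables (muQ : 'M[R]_(S, U)) (Mset : {set 'I_S}).

Lemma row_natmx_mul (X : 'M[nat]_(M, S)) (i : 'I_M) :
  row i (natmx R X *m muQ) = \sum_s (X i s)%:R *: row s muQ.
Proof. by rewrite row_mul mulmx_sum_row; apply: eq_bigr => s _; rewrite !mxE. Qed.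

Lemma row_natmx_mul_supported (X : 'M[nat]_(M, S)) (i : 'I_M) :
  (forall s, s \notin Mset -> X i s = 0%N) ->
  row i (natmx R X *m muQ) = \sum_(s in Mset) (X i s)%:R *: row s muQ.
Proof.
move=> X0; rewrite row_natmx_mul (bigID (mem Mset)) /=.
by rewrite [X in _ + X]big1 ?addr0 // => s /X0 ->; rewrite scale0r.
Qed.

(* Necessity: test exact matching on a single agent of species st. *)
Lemma suffices_exact_int_generated :
  (0 < M)%N -> suffices_exact M muQ Mset -> int_generated muQ Mset.
Proof.
move=> M_gt0 suffMset st st_out.
pose i0 : 'I_M := Ordinal M_gt0.
have [Xh [Xh_supp sameY]] := suffMset (delta_mx i0 st).
exists (Xh i0); rewrite -row_natmx_mul_supported; last exact: Xh_supp.
rewrite sameY row_natmx_mul (bigD1 st) //= big1 ?addr0.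
  by rewrite mxE !eqxx scale1r.
by move=> s /negbTE s_st; rewrite mxE eqxx s_st scale0r.
Qed.

Section Reduction.
(* alpha st s: number of agents of species s in Mset replacing one agent of
   species st outside Mset. *)
Variable alpha : 'I_S -> 'I_S -> nat.
Hypothesis alphaP : forall st, st \notin Mset ->
  \sum_(s in Mset) (alpha st s)%:R *: row s muQ = row st muQ.

Definition reduce_distribution (X : 'M[nat]_(M, S)) : 'M[nat]_(M, S) :=
  \matrix_(i, s) (if s \in Mset then
    (X i s + \sum_(st | st \notin Mset) X i st * alpha st s)%N else 0%N).

Lemma reduce_distribution_supported (X : 'M[nat]_(M, S)) i s :
  s \notin Mset -> reduce_distribution X i s = 0%N.
Proof. by move=> s_out; rewrite mxE (negbTE s_out). Qed.

Lemma reduce_distribution_mul (X : 'M[nat]_(M, S)) :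
  natmx R (reduce_distribution X) *m muQ = natmx R X *m muQ.
Proof.
apply/row_matrixP => i.
rewrite row_natmx_mul_supported; last exact: reduce_distribution_supported.
rewrite row_natmx_mul [RHS](bigID (mem Mset)) /=.
under eq_bigr => s s_in do rewrite mxE s_in natrD scalerDl.
rewrite big_split /=; congr (_ + _).
under eq_bigr => s _ do rewrite natr_sum scaler_suml.
rewrite exchange_big /=; apply: eq_bigr => st st_out.
rewrite -(alphaP st st_out) scaler_sumr; apply: eq_bigr => s _.
by rewrite natrM scalerA.
Qed.

End Reduction.

Lemma int_generated_suffices_exact :
  int_generated muQ Mset -> suffices_exact M muQ Mset.
Proof.
move=> gen.
have [alpha alphaP] : exists alpha : 'I_S -> 'I_S -> nat, forall st,
    st \notin Mset ->
    \sum_(s in Mset) (alpha st s)%:R *: row s muQ = row st muQ.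
  apply: (fin_all_exists (P := fun st (a : 'I_S -> nat) => st \notin Mset ->
    \sum_(s in Mset) (a s)%:R *: row s muQ = row st muQ)) => st.
  have [st_in | st_out] := boolP (st \in Mset); first by exists (fun=> 0%N).
  by have [a aP] := gen st st_out; exists a.
move=> X; exists (reduce_distribution alpha X); split.
  by move=> i s; apply: reduce_distribution_supported.
exact: reduce_distribution_mul.
Qed.

End ExactMatching.

Theorem proposition1 (R : realFieldType) (S U M : nat)
    (hS : (1 <= S)%N) (hU : (1 <= U)%N) (hM : (1 <= M)%N)
    (muQ : 'M[R]_(S, U)) (hmu : forall s u, 0 <= muQ s u) :
  (forall Mset : {set 'I_S},
      suffices_exact M muQ Mset <-> int_generated muQ Mset) /\
  (forall n : nat,
      is_min_card (fun A => suffices_exact M muQ A) n <->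
      is_min_card (fun A => int_generated muQ A) n).
Proof.
have suffE Mset : suffices_exact M muQ Mset <-> int_generated muQ Mset.
  split; first exact: suffices_exact_int_generated.
  exact: int_generated_suffices_exact.
by split=> // n; apply: is_min_card_equiv.
Qed.
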